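(* Let $D_1,\dots,D_n$ be semi-interlaced polytopes in a finite set $\mathbf P\subset\mathbb Z^n$ with $P=\operatorname{Conv}\mathbf P$. Let $S_1,S_2$ be sutures such that $S_1\cap S_2\neq\emptyset$ and $\operatorname{aff}(S_1\cap S_2)=\operatorname{aff}(S_1)\cap\operatorname{aff}(S_2)$. Then both $S_1\cap S_2$ and $P\cap\operatorname{aff}(S_1\cup S_2)$ are sutures.
   Context: **Daughter polytope.** For a nonempty polytope $D$ with vertices in $\mathbf P$, $\mathcal D(D)$ is the set of inclusion-maximal faces of $P$ disjoint from $D$. $D$ is a daughter polytope of $\mathbf P$ if: 1. distinct members of $\mathcal D(D)$ are disjoint; 2. $D=\operatorname{Conv}(\mathbf P\setminus\bigcup_{F\in\mathcal D(D)}F)$. **Semi-interlaced and sutures.** Daughter polytopes $D_1,\dots,D_n$ of $\mathbf P\subset\mathbb Z^n$ are semi-interlaced in $\mathbf P$ if every face $F$ of $P$ meets at least $\dim F$ of them. A face of $P$ meeting exactly $\dim F$ of them is called a suture. *)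

From HB Require Import structures.
From mathcomp Require Import all_boot all_order all_algebra.
From mathcomp Require Import boolp classical_sets reals.
Set Implicit Arguments. Unset Strict Implicit. Unset Printing Implicit Defensive.
Import Order.TTheory GRing.Theory Num.Theory.
Local Open Scope ring_scope.
Local Open Scope classical_set_scope.

Section Polytopes.
Variables (R : realType) (n : nat).
Local Notation V := 'rV[R]_n.

Definition dotp (x y : V) : R := \sum_(j < n) x 0 j * y 0 j.

Definition conv (A : set V) : set V := fun x =>
  exists (m : nat) (p : 'I_m -> V) (w : 'I_m -> R),
    (forall i, A (p i)) /\ (forall i, 0 <= w i) /\
    \sum_(i < m) w i = 1 /\ x = \sum_(i < m) w i *: p i.

Definition aff (A : set V) : set V := fun x =>
  exists (m : nat) (p : 'I_m -> V) (w : 'I_m -> R),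
    (forall i, A (p i)) /\
    \sum_(i < m) w i = 1 /\ x = \sum_(i < m) w i *: p i.

Definition aff_indep (m : nat) (p : 'I_m.+1 -> V) : Prop :=
  \rank (\matrix_(i < m, j < n) (p (lift ord0 i) 0 j - p ord0 0 j)) = m.

Definition has_dim (A : set V) (k : nat) : Prop :=
  (exists p : 'I_k.+1 -> V, (forall i, A (p i)) /\ aff_indep p) /\
  (forall (m : nat) (p : 'I_m.+1 -> V),
      (forall i, A (p i)) -> aff_indep p -> (m <= k)%N).

(* F is a face of the convex set P (defined by a valid linear inequality;
   includes the empty face and P itself) *)
Definition face (P F : set V) : Prop :=
  exists (c : V) (d : R),
    (forall x, P x -> dotp c x <= d) /\
    F = [set x | P x /\ dotp c x = d].

Definition maxdisj (P D F : set V) : Prop :=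
  face P F /\ F `&` D = set0 /\
  (forall G, face P G -> G `&` D = set0 -> F `<=` G -> G = F).

Definition daughter (Pts D : set V) : Prop :=
  let P := conv Pts in
  (exists Q, Q `<=` Pts /\ D = conv Q) /\ D !=set0 /\
  (forall F G, maxdisj P D F -> maxdisj P D G -> F <> G -> F `&` G = set0) /\
  D = conv [set p | Pts p /\ forall F, maxdisj P D F -> ~ F p].

Definition meets_exactly (D : 'I_n -> set V) (F : set V) (I : {set 'I_n}) :=
  forall i, i \in I <-> D i `&` F !=set0.

Definition semi_interlaced (Pts : set V) (D : 'I_n -> set V) : Prop :=
  (forall i, daughter Pts (D i)) /\
  (forall F k I, face (conv Pts) F -> F !=set0 -> has_dim F k ->
     meets_exactly D F I -> (k <= #|I|)%N).

(* a suture: a (nonempty) face F meeting exactly dim F of the D_i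
   (the empty face, of dimension -1, is never a suture) *)
Definition suture (Pts : set V) (D : 'I_n -> set V) (F : set V) : Prop :=
  face (conv Pts) F /\ F !=set0 /\
  exists k I, has_dim F k /\ meets_exactly D F I /\ #|I| = k.

End Polytopes.

Definition intpt (R : realType) (n : nat) (z : 'rV[int]_n) : 'rV[R]_n :=
  map_mx (fun a : int => a%:~R) z.

From HB Require Import structures.
From mathcomp Require Import all_boot all_order all_algebra.
From mathcomp Require Import boolp classical_sets reals.
From mathcomp Require Import zify.
Import Order.TTheory GRing.Theory Num.Theory.
Local Open Scope ring_scope.
Local Open Scope classical_set_scope.
Set Implicit Arguments. Unset Strict Implicit. Unset Printing Implicit Defensive.

(* For each i such that D_i meets neither S1 nor S2, the maximal faces disjoint from D_i
   containing S1 and S2 share a point of S1 n S2, hence coincide, as distinct ones are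
   disjoint.  Intersecting these faces gives a face F containing S1 u S2 that meets only
   the D_i met by S1 or S2.  Since aff (S1 n S2) = aff S1 n aff S2, the dimension formula
   dim S1 + dim S2 <= dim (S1 u S2) + dim (S1 n S2) holds, and semi-interlacing closes
     #(I1 u I2) + #(I1 n I2) = dim S1 + dim S2 <= dim (S1 u S2) + dim (S1 n S2)
       <= dim F + dim (S1 n S2) <= #{i | D_i meets F} + #{i | D_i meets S1 n S2}
       <= #(I1 u I2) + #(I1 n I2)
   into equalities: S1 n S2 and F are sutures, and dim F = dim (S1 u S2) forces
   F = P n aff (S1 u S2). *)

Lemma ex_maxn_prop (Q : nat -> Prop) (m : nat) :
  (exists i, Q i) -> (forall i, Q i -> (i <= m)%N) ->
  exists k, Q k /\ forall i, Q i -> (i <= k)%N.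
Proof.
move=> [i0 Qi0] Qle.
have exQ : exists i, `[< Q i >] by exists i0; apply/asboolP.
have [k /asboolP Qk kmax] := ex_maxnP exQ (fun i Qi => Qle i (asboolW Qi)).
by exists k; split=> // i Qi; apply: kmax; apply/asboolP.
Qed.

Section Dimension.
Variables (R : realType) (n : nat).
Local Notation V := 'rV[R]_n.

Definition diff_mx m (p : 'I_m.+1 -> V) : 'M[R]_(m, n) :=
  \matrix_(i < m, j < n) (p (lift ord0 i) 0 j - p ord0 0 j).

Lemma row_diff_mx m (p : 'I_m.+1 -> V) i :
  row i (diff_mx p) = p (lift ord0 i) - p ord0.
Proof. by apply/rowP => j; rewrite !mxE. Qed.

Lemma submx_diff k (B : 'M[R]_(k, n)) (o x y : V) :
  (x - o <= B)%MS -> (y - o <= B)%MS -> (x - y <= B)%MS.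
Proof.
move=> xB yB.
have -> : x - y = (x - o) + (-1) *: (y - o) by rewrite scaleN1r opprB addrA subrK.
by apply: addmx_sub => //; apply: scalemx_sub.
Qed.

Definition extend_pts m (p : 'I_m.+1 -> V) (x : V) : 'I_m.+2 -> V :=
  fun i => if (i < m.+1)%N then p (inord i) else x.

Lemma extend_pts_in (A : set V) m (p : 'I_m.+1 -> V) x :
  (forall i, A (p i)) -> A x -> forall i, A (extend_pts p x i).
Proof. by move=> Ap Ax i; rewrite /extend_pts; case: ifP. Qed.

Lemma aff_indep_extend m (p : 'I_m.+1 -> V) (x : V) :
  aff_indep p -> ~~ (x - p ord0 <= diff_mx p)%MS -> aff_indep (extend_pts p x).
Proof.
rewrite /aff_indep -/(diff_mx p) -/(diff_mx (extend_pts p x)) => rkA xA.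
have rkB : \rank (x - p ord0) = 1%N.
  by rewrite rank_rV; case: eqP xA => // ->; rewrite sub0mx.
set A := diff_mx p; set B := x - p ord0.
(* B is a single row outside A, so A and B meet trivially *)
have rk_cap : \rank (A :&: B)%MS = 0%N.
  have [le_cap eq_cap] := mxrank_leqif_sup (capmxSr A B).
  suff : (\rank (A :&: B)%MS < \rank B)%N by rewrite rkB ltnS leqn0 => /eqP.
  rewrite ltn_neqAle le_cap andbT eq_cap.
  by apply: contra xA => /submx_trans; apply; apply: capmxSl.
have p0 : extend_pts p x ord0 = p ord0.
  by rewrite /extend_pts /=; congr p; apply: val_inj; rewrite /= inordK.
have sub : ((A + B)%MS <= diff_mx (extend_pts p x))%MS.
  rewrite addsmx_sub; apply/andP; split.
    apply/row_subP => i; rewrite /A row_diff_mx.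
    have -> : p (lift ord0 i) - p ord0
              = row (widen_ord (leqnSn m) i) (diff_mx (extend_pts p x)).
      rewrite row_diff_mx p0 /extend_pts /= ltnS ltn_ord; congr (p _ - _).
      by apply: val_inj; rewrite /= inordK // ltnS ltn_ord.
    exact: row_sub.
  have -> : B = row ord_max (diff_mx (extend_pts p x)).
    by rewrite row_diff_mx p0 /extend_pts /= ltnn.
  exact: row_sub.
apply/eqP; rewrite eqn_leq rank_leq_row /=.
apply: leq_trans (mxrankS sub).
by have := mxrank_sum_cap A B; rewrite rk_cap rkA rkB addn0 addn1 => ->.
Qed.

Lemma has_dim_basis (A : set V) k : has_dim A k ->
  exists p : 'I_k.+1 -> V, [/\ forall i, A (p i), aff_indep p &
    forall x y, A x -> A y -> (x - y <= diff_mx p)%MS].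
Proof.
move=> [[p [Ap indep_p]] dim_le]; exists p; split=> // x y Ax Ay.
have spanA z : A z -> (z - p ord0 <= diff_mx p)%MS.
  move=> Az; apply/negPn/negP => zA.
  have := dim_le _ _ (extend_pts_in Ap Az) (aff_indep_extend indep_p zA).
  by rewrite ltnn.
exact: submx_diff (spanA _ Ax) (spanA _ Ay).
Qed.

Lemma aff_of_span (A : set V) m (p : 'I_m.+1 -> V) x :
  (forall i, A (p i)) -> (x - p ord0 <= diff_mx p)%MS -> aff A x.
Proof.
move=> Ap /submxP [w]; rewrite mulmx_sum_row.
under eq_bigr do rewrite row_diff_mx scalerBr.
rewrite sumrB -scaler_suml => /eqP; rewrite subr_eq => /eqP ->.
exists m.+1, p, (fun i => if unlift ord0 i is Some j then w 0 j else 1 - \sum_j w 0 j).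
rewrite !big_ord_recl !unlift_none.
under [X in _ = 1 /\ _ = _ + X]eq_bigr do rewrite liftK.
under [X in _ + X = 1 /\ _]eq_bigr do rewrite liftK.
split=> //; split; first by rewrite subrK.
by rewrite scalerBl scale1r [RHS]addrC addrA addrAC.
Qed.

Lemma span_of_aff (A : set V) k (B : 'M[R]_(k, n)) o x :
  (forall a, A a -> (a - o <= B)%MS) -> aff A x -> (x - o <= B)%MS.
Proof.
move=> AB [m [p [w [Ap [w1 ->]]]]].
have -> : \sum_(i < m) w i *: p i - o = \sum_(i < m) w i *: (p i - o).
  by under [RHS]eq_bigr do rewrite scalerBr; rewrite sumrB -scaler_suml w1 scale1r.
by apply: summx_sub => i _; apply/scalemx_sub/AB.
Qed.

Lemma has_dim_exists (A : set V) : A !=set0 -> exists k, has_dim A k.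
Proof.
move=> [a Aa].
have [|i [p [_ <-]]|k [hk kmax]] :=
  @ex_maxn_prop (fun k => exists p : 'I_k.+1 -> V, (forall i, A (p i)) /\ aff_indep p) n.
- exists 0%N, (fun _ => a); split=> //.
  by apply/eqP; rewrite -leqn0 rank_leq_row.
- exact: rank_leq_col.
- by exists k; split=> // m p Ap indep_p; apply: kmax; exists p.
Qed.

Lemma has_dim_le (A B : set V) a b :
  A `<=` B -> has_dim A a -> has_dim B b -> (a <= b)%N.
Proof. by move=> AB [[p [Ap indep_p]] _] [_ dimB]; apply: dimB indep_p => i; apply/AB. Qed.

Lemma has_dim_eq_sub_aff (A B : set V) k :
  A `<=` B -> has_dim A k -> has_dim B k -> B `<=` aff A.
Proof.
move=> AB [[p [Ap indep_p]] _] [_ dimB] x Bx.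
have [//|xA] := boolP (x - p ord0 <= diff_mx p)%MS; first exact: aff_of_span Ap.
have Bp i : B (p i) by apply: AB.
by have := dimB _ _ (extend_pts_in Bp Bx) (aff_indep_extend indep_p xA); rewrite ltnn.
Qed.

Lemma has_dim_setU_setI (S1 S2 : set V) d1 d2 s u :
  has_dim S1 d1 -> has_dim S2 d2 -> has_dim (S1 `&` S2) s -> has_dim (S1 `|` S2) u ->
  S1 `&` S2 !=set0 -> aff (S1 `&` S2) = aff S1 `&` aff S2 -> (d1 + d2 <= u + s)%N.
Proof.
move=> /has_dim_basis [p1 [S1p1 rk1 span1]] /has_dim_basis [p2 [S2p2 rk2 span2]].
move=> /has_dim_basis [p0 [_ rk0 span0]] /has_dim_basis [q [_ rkU spanU]].
move=> [o [S1o S2o]] aff_cap.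
set U1 := diff_mx p1; set U2 := diff_mx p2.
have capU1U2 : ((U1 :&: U2)%MS <= diff_mx p0)%MS.
  apply/row_subP => i; set v := row i _.
  have /andP [vU1 vU2] : (v <= U1)%MS && (v <= U2)%MS by rewrite -sub_capmx row_sub.
  have aff_ov S k (p : 'I_k.+1 -> V) : (forall i, S (p i)) ->
      (forall x y, S x -> S y -> (x - y <= diff_mx p)%MS) -> S o ->
      (v <= diff_mx p)%MS -> aff S (o + v).
    move=> Sp spanS So vp; apply: (aff_of_span Sp).
    by rewrite addrAC; apply: addmx_sub => //; apply: spanS.
  have : aff (S1 `&` S2) (o + v).
    by rewrite aff_cap; split; [apply: aff_ov S1p1 span1 S1o _ | apply: aff_ov S2p2 span2 S2o _].
  move/(span_of_aff (fun a Sa => span0 a o Sa (conj S1o S2o))).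
  by rewrite addrAC subrr add0r.
have sumU1U2 : ((U1 + U2)%MS <= diff_mx q)%MS.
  rewrite addsmx_sub; apply/andP; split; apply/row_subP => i; rewrite row_diff_mx.
    by apply: spanU; left.
  by apply: spanU; right.
rewrite -rk1 -rk2 -mxrank_sum_cap -rkU -rk0.
exact: leq_add (mxrankS sumU1U2) (mxrankS capU1U2).
Qed.

End Dimension.

Section Faces.
Variables (R : realType) (n : nat).
Local Notation V := 'rV[R]_n.

Lemma dotp_sumr (c : V) m (f : 'I_m -> V) :
  dotp c (\sum_(i < m) f i) = \sum_(i < m) dotp c (f i).
Proof. by rewrite /dotp; under eq_bigr do rewrite summxE mulr_sumr; rewrite exchange_big. Qed.

Lemma dotp_suml (I : finType) (Z : pred I) (c : I -> V) x :
  dotp (\sum_(i | Z i) c i) x = \sum_(i | Z i) dotp (c i) x.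
Proof. by rewrite /dotp; under eq_bigr do rewrite summxE mulr_suml; rewrite exchange_big. Qed.

Lemma dotpZr (c : V) a x : dotp c (a *: x) = a * dotp c x.
Proof. by rewrite /dotp mulr_sumr; apply: eq_bigr => j _; rewrite mxE mulrCA. Qed.

Lemma dotp_aff (A : set V) c d x :
  (forall a, A a -> dotp c a = d) -> aff A x -> dotp c x = d.
Proof.
move=> Acd [m [p [w [Ap [w1 ->]]]]].
rewrite dotp_sumr; under eq_bigr do rewrite dotpZr Acd //.
by rewrite -mulr_suml w1 mul1r.
Qed.

Lemma conv_sub_aff (A : set V) : conv A `<=` aff A.
Proof. by move=> x [m [p [w [Ap [_ wx]]]]]; exists m, p, w. Qed.

Lemma subset_conv (A : set V) : A `<=` conv A.
Proof.
move=> x Ax; exists 1%N, (fun _ => x), (fun _ => 1).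
by rewrite !big_ord1 scale1r.
Qed.

Lemma conv_mono (A B : set V) : A `<=` B -> conv A `<=` conv B.
Proof. by move=> AB x [m [p [w [Ap wx]]]]; exists m, p, w; split=> // i; apply/AB. Qed.

Lemma face_sub (P F : set V) : face P F -> F `<=` P.
Proof. by move=> [c [d [_ ->]]] x []. Qed.

Lemma face_aff (P F A : set V) : face P F -> A `<=` F -> P `&` aff A `<=` F.
Proof.
move=> [c [d [_ ->]]] AF x [Px affx]; split=> //.
by apply: dotp_aff affx => a /AF [].
Qed.

Lemma face_of_valid_ineqs (P : set V) (I : finType) (Z : pred I)
    (c : I -> V) (d : I -> R) :
  (forall i, Z i -> forall x, P x -> dotp (c i) x <= d i) ->
  face P [set x | P x /\ forall i, Z i -> dotp (c i) x = d i].
Proof.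
move=> valid; exists (\sum_(i | Z i) c i), (\sum_(i | Z i) d i); split.
  by move=> x Px; rewrite dotp_suml; apply: ler_sum => i Zi; apply: valid.
apply/seteqP; split=> x /= [Px xeq]; split=> //.
  by rewrite dotp_suml; apply: eq_bigr.
have slack_ge0 i : Z i -> 0 <= d i - dotp (c i) x by move=> Zi; rewrite subr_ge0 valid.
move=> i Zi; apply/eqP; rewrite eq_sym -subr_eq0; apply/eqP.
by apply: (psumr_eq0P slack_ge0) Zi; rewrite sumrB -dotp_suml xeq subrr.
Qed.

Lemma face_bigcap (P : set V) (I : finType) (Z : pred I) (M : I -> set V) :
  (forall i, Z i -> face P (M i)) -> face P [set x | P x /\ forall i, Z i -> M i x].
Proof.
move=> faceM.
have cd_ex i : exists cd : V * R, Z i ->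
    (forall x, P x -> dotp cd.1 x <= cd.2) /\ M i = [set x | P x /\ dotp cd.1 x = cd.2].
  by case: (boolP (Z i)) => [/faceM [c [d cdMi]]|_]; [exists (c, d) | exists (0, 0)].
have [cd cdM] := choice cd_ex.
suff -> : [set x | P x /\ forall i, Z i -> M i x] =
          [set x | P x /\ forall i, Z i -> dotp (cd i).1 x = (cd i).2].
  by apply: face_of_valid_ineqs => i /cdM [].
apply/seteqP; split=> x [Px xM]; split=> // i Zi; have [_ eM] := cdM i Zi.
  by have := xM i Zi; rewrite eM => -[].
by rewrite eM; split=> //; apply: xM.
Qed.

Lemma face_setI (P F G : set V) : face P F -> face P G -> face P (F `&` G).
Proof.
move=> faceF faceG.
have -> : F `&` G = [set x | P x /\ forall b : bool, predT b -> (if b then F else G) x].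
  apply/seteqP; split=> [x [Fx Gx]|x [_ FGx]].
    by split; [apply: face_sub faceF _ Fx | case].
  by split; [apply: (FGx true) | apply: (FGx false)].
by apply: face_bigcap; case.
Qed.

(* A point of a face of conv Pts is a convex combination of points of Pts, and those
   with positive weight lie on the supporting hyperplane. *)
Lemma face_conv_pts (Pts F : set V) :
  face (conv Pts) F -> F = conv [set p | Pts p /\ F p].
Proof.
move=> faceF; have [c [d [valid eF]]] := faceF.
apply/seteqP; split=> x; last first.
  move=> convx; rewrite eF; split; first by apply: conv_mono convx => p [].
  by apply: dotp_aff (conv_sub_aff convx) => p [_]; rewrite eF => -[].
move=> Fx; have [[m [p [w [Pts_p [w_ge0 [w1 ex]]]]]] cx] : conv Pts x /\ dotp c x = d.
  by move: Fx; rewrite eF.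
have slack0 i : w i * (d - dotp c (p i)) = 0.
  have slack_ge0 j : true -> 0 <= w j * (d - dotp c (p j)).
    by move=> _; rewrite mulr_ge0 // subr_ge0 valid //; apply: subset_conv.
  apply: (psumr_eq0P slack_ge0) => //.
  under eq_bigr do rewrite mulrBr.
  rewrite sumrB -mulr_suml w1 mul1r -cx ex dotp_sumr.
  by under eq_bigr do rewrite dotpZr; rewrite subrr.
have F_p i : w i != 0 -> F (p i).
  move=> wi0; rewrite eF; split; first by apply: subset_conv.
  by move/eqP: (slack0 i); rewrite mulf_eq0 (negbTE wi0) subr_eq0 => /eqP <-.
have [i0 /andP [_ wi0_gt0]] : exists i, true && (0 < w i).
  by apply: psumr_neq0P => //; rewrite w1; apply/eqP; rewrite oner_eq0.
(* zero-weight points are replaced by p i0 *)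
exists m, (fun i => if w i == 0 then p i0 else p i), w; split; last split=> //.
  move=> i; case: ifP => [_|/negbT wi0]; split=> //; apply: F_p => //.
  by rewrite lt0r_neq0.
split=> //; rewrite ex; apply: eq_bigr => i _.
by case: ifP => // /eqP ->; rewrite !scale0r.
Qed.

End Faces.

Section Daughters.
Variables (R : realType) (n : nat).
Local Notation V := 'rV[R]_n.

Section FinitePoints.
Variables (s : seq V) (Pts : set V).
Hypothesis Pts_s : Pts `<=` [set p | p \in s].

Definition pts_in (H : set V) : {set 'I_(size s)} :=
  [set i : 'I_(size s) | `[< H (nth 0 s i) >]].

Lemma maxdisj_exists (D G : set V) :
  face (conv Pts) G -> G `&` D = set0 -> exists M, maxdisj (conv Pts) D M /\ G `<=` M.
Proof.
move=> faceG GD.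
(* faces are determined by the points of Pts they contain, so take one with most points *)
have [|k [H [_ _ _ <-]]|k [[H0 [faceH0 H0D GH0 cardH0]] kmax]] := @ex_maxn_prop
  (fun k => exists H, [/\ face (conv Pts) H, H `&` D = set0, G `<=` H & #|pts_in H| = k])
  (size s).
- by exists #|pts_in G|, G; split.
- by rewrite -[X in (_ <= X)%N]card_ord max_card.
exists H0; split=> //; split=> //; split=> // H faceH HD H0H.
have sub_pts : pts_in H0 \subset pts_in H.
  by apply/fintype.subsetP => i; rewrite !inE; apply: H0H.
have card_pts : #|pts_in H0| = #|pts_in H|.
  apply/eqP; rewrite eqn_leq subset_leq_card //= cardH0; apply: kmax.
  by exists H; split=> //; apply: subset_trans GH0 H0H.
have H_H0 p : Pts p -> H p -> H0 p.
  move=> /Pts_s ps Hp; have ix : (index p s < size s)%N by rewrite index_mem.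
  have := (subset_cardP card_pts sub_pts) (Ordinal ix); rewrite !inE /= nth_index // => eqH.
  by apply/asboolP; rewrite eqH; apply/asboolP.
apply/seteqP; split=> //; rewrite {1}(face_conv_pts faceH) (face_conv_pts faceH0).
by apply: conv_mono => p [Pp Hp]; split=> //; apply: H_H0.
Qed.

Lemma daughter_disj_face_setU (D S1 S2 : set V) :
  daughter Pts D -> face (conv Pts) S1 -> face (conv Pts) S2 ->
  S1 `&` D = set0 -> S2 `&` D = set0 -> S1 `&` S2 !=set0 ->
  exists M, [/\ face (conv Pts) M, M `&` D = set0 & S1 `|` S2 `<=` M].
Proof.
move=> [_ [_ [maxdisj_disj _]]] face1 face2 S1D S2D [o [S1o S2o]].
have [M1 [maxM1 S1M1]] := maxdisj_exists face1 S1D.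
have [M2 [maxM2 S2M2]] := maxdisj_exists face2 S2D.
have eM : M1 = M2.
  have [//|neM] := pselect (M1 = M2).
  have /seteqP [M12_0 _] := maxdisj_disj _ _ maxM1 maxM2 neM.
  by case: (M12_0 o); split; [apply: S1M1 | apply: S2M2].
by case: maxM1 => faceM1 [M1D _]; exists M1; split=> // x [/S1M1|/S2M2]; rewrite ?eM.
Qed.

End FinitePoints.

Definition meetset (D : 'I_n -> set V) (F : set V) : {set 'I_n} :=
  [set i | `[< D i `&` F !=set0 >]].

Lemma meets_exactly_meetset (D : 'I_n -> set V) F : meets_exactly D F (meetset D F).
Proof. by move=> i; rewrite inE asboolE. Qed.

Lemma meets_exactly_disj (D : 'I_n -> set V) S I i :
  meets_exactly D S I -> i \notin I -> S `&` D i = set0.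
Proof.
move=> meetS iI; apply/seteqP; split=> // x [Sx Dx].
by move/negP: iI; apply; apply/meetS; exists x.
Qed.

Lemma meetset_setI (D : 'I_n -> set V) S1 S2 I1 I2 :
  meets_exactly D S1 I1 -> meets_exactly D S2 I2 -> meetset D (S1 `&` S2) \subset I1 :&: I2.
Proof.
move=> meet1 meet2; apply/fintype.subsetP => i; rewrite inE asboolE => -[x [Dx [S1x S2x]]].
by rewrite inE; apply/andP; split; [apply/meet1 | apply/meet2]; exists x.
Qed.

Lemma face_containing_setU (s : seq V) (Pts : set V) (D : 'I_n -> set V) S1 S2 I1 I2 :
  Pts `<=` [set p | p \in s] -> (forall i, daughter Pts (D i)) ->
  face (conv Pts) S1 -> face (conv Pts) S2 -> S1 `&` S2 !=set0 ->
  meets_exactly D S1 I1 -> meets_exactly D S2 I2 ->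
  exists F, [/\ face (conv Pts) F, S1 `|` S2 `<=` F & meetset D F \subset I1 :|: I2].
Proof.
move=> Pts_s daughterD face1 face2 S12 meet1 meet2.
have M_ex i : exists M : set V, i \notin I1 :|: I2 ->
    [/\ face (conv Pts) M, M `&` D i = set0 & S1 `|` S2 `<=` M].
  have [|] := boolP (i \in I1 :|: I2); first by exists set0.
  rewrite !inE negb_or => /andP [iI1 iI2].
  have [M HM] := daughter_disj_face_setU Pts_s (daughterD i) face1 face2
    (meets_exactly_disj meet1 iI1) (meets_exactly_disj meet2 iI2) S12.
  by exists M.
have [M HM] := choice M_ex.
exists [set x | conv Pts x /\ forall i, i \notin I1 :|: I2 -> M i x]; split.
- by apply: (face_bigcap (Z := fun i => i \notin I1 :|: I2)) => i /HM [].
- move=> x S12x; split; first by case: S12x => [/(face_sub face1)|/(face_sub face2)].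
  by move=> i /HM [_ _]; apply.
- apply/fintype.subsetP => i; rewrite inE asboolE => -[x [Dx [_ Mx]]].
  apply/negPn/negP => iI; have [_ /seteqP [MD0 _] _] := HM i iI.
  by apply: (MD0 x); split=> //; apply: Mx.
Qed.

End Daughters.

Unset Implicit Arguments.

Theorem proposition3p2 (R : realType) (n : nat) (Pz : seq 'rV[int]_n)
  (D : 'I_n -> set 'rV[R]_n) (S1 S2 : set 'rV[R]_n) :
  let Pts : set 'rV[R]_n := [set intpt R z | z in [set z | z \in Pz]] in
  let P := conv Pts in
  semi_interlaced Pts D ->
  suture Pts D S1 -> suture Pts D S2 ->
  S1 `&` S2 !=set0 ->
  aff (S1 `&` S2) = aff S1 `&` aff S2 ->
  suture Pts D (S1 `&` S2) /\ suture Pts D (P `&` aff (S1 `|` S2)).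
Proof.
move=> Pts P [daughterD semi] [face1 [_ [d1 [I1 [dim1 [meet1 card1]]]]]]
  [face2 [_ [d2 [I2 [dim2 [meet2 card2]]]]]] S12 aff_cap.
have Pts_s : Pts `<=` [set p | p \in map (@intpt R n) Pz].
  by move=> _ [z zP <-]; apply: map_f.
have [F [faceF S12F meetF]] :=
  face_containing_setU Pts_s daughterD face1 face2 S12 meet1 meet2.
have [o [S1o S2o]] := S12.
have neF : F !=set0 by exists o; apply: S12F; left.
have [s dimS12] := has_dim_exists S12.
have [f dimF] := has_dim_exists neF.
have [u dimU] : exists u, has_dim (S1 `|` S2) u by apply: has_dim_exists; exists o; left.
have face12 := face_setI face1 face2.
have semi12 := semi _ _ _ face12 S12 dimS12 (meets_exactly_meetset D _).
have semiF := semi _ _ _ faceF neF dimF (meets_exactly_meetset D _).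
have grassmann := has_dim_setU_setI dim1 dim2 dimS12 dimU S12 aff_cap.
have dimU_le := has_dim_le S12F dimU dimF.
have card12 := subset_leq_card (meetset_setI meet1 meet2).
have cardF := subset_leq_card meetF.
have cardUI := cardsUI I1 I2.
have PaffF : P `&` aff (S1 `|` S2) = F.
  apply/seteqP; split; first exact: face_aff.
  have eq_uf : u = f by lia.
  subst u; move=> x Fx; split; first exact: face_sub faceF _ Fx.
  exact: has_dim_eq_sub_aff S12F dimU dimF _ Fx.
rewrite PaffF; split; split=> //; split=> //.
- by exists s, (meetset D (S1 `&` S2)); do 2 split=> //; [apply: meets_exactly_meetset | lia].
- by exists f, (meetset D F); do 2 split=> //; [apply: meets_exactly_meetset | lia].
Qed.
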